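(* Let $\mathcal{Y}\in\mathbb{Z}^{n_1\times\cdots\times n_d}$ be a sample from $\operatorname{TBM}(\rho,\mathcal{S},z_1,\dots,z_d)$ whose entries are sub-Poisson with dispersion parameter $\rho$. Let $1\le d'<d$ and define the aggregate tensor $\mathcal{Y}'\in\mathbb{Z}^{n_1\times\cdots\times n_{d'}}$ by $\mathcal{Y}'_{i_1\dots i_{d'}} = \sum_{i_{d'+1},\dots,i_d}\mathcal{Y}_{i_1\dots i_d}$. Then $\mathcal{Y}'$ is a sample from $\operatorname{TBM}(\rho',\mathcal{S}',z_1,\dots,z_{d'})$ with density $\rho' = n_{d'+1}\cdots n_d\,\rho$ and core tensor $$\mathcal{S}'_{j_1\dots j_{d'}} = \frac{1}{n_{d'+1}\cdots n_d}\sum_{i_{d'+1},\dots,i_d}\mathcal{S}_{j_1\dots j_{d'} z_{d'+1}(i_{d'+1})\dots z_d(i_d)},$$ and the entries of $\mathcal{Y}'$ are sub-Poisson with dispersion parameter $\rho'$.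
   Context: Tensor block model: $\operatorname{TBM}(\rho,\mathcal{S},z_1,\dots,z_d)$ with dimensions $n_1,\dots,n_d$ and cluster counts $r_1,\dots,r_d$ is the law of a random tensor $\mathcal{Y}\in\mathbb{Z}^{n_1\times\cdots\times n_d}$ with independent entries and $\mathbb{E}\mathcal{Y}_{i_1\dots i_d} = \rho\,\mathcal{S}_{z_1(i_1)\dots z_d(i_d)}$, where $\rho\ge 0$, $\mathcal{S}\in[-1,1]^{r_1\times\cdots\times r_d}$, and $z_j\in[r_j]^{n_j}$ (here $[r]=\{1,\dots,r\}$). Sub-Poisson: a real integrable random variable $X$ is sub-Poisson with dispersion parameter $\rho$ if $\mathbb{E}e^{\lambda(X-\mathbb{E}X)} \le \exp\{\rho(e^{|\lambda|}-1-|\lambda|)\}$ for all $\lambda\in\mathbb{R}$ and $\mathbb{E}|X-\mathbb{E}X|\le\rho$. *)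

From HB Require Import structures.
From mathcomp Require Import all_boot all_order all_algebra.
From mathcomp Require Import all_classical all_reals all_analysis.
Set Implicit Arguments. Unset Strict Implicit. Unset Printing Implicit Defensive.
Import Order.TTheory GRing.Theory Num.Theory.
Local Open Scope classical_set_scope.
Local Open Scope ring_scope.

(* Modes are 0-based: mode k : 'I_d; the index set of mode k is 'I_(n k). *)
Definition Idx (d : nat) (n : 'I_d -> nat) := {dffun forall k : 'I_d, 'I_(n k)}.

(* Cluster labels of an index i, as natural numbers (label z_k(i_k) - 1). *)
Definition labels (d : nat) (n r : 'I_d -> nat)
  (z : forall k : 'I_d, 'I_(n k) -> 'I_(r k)) (i : Idx n) : 'I_d -> nat :=
  fun k => val (z k (i k)).

Definition mutually_independent (R : realType) (dm : measure_display)
  (T : measurableType dm) (P : probability T R) (I : finType)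
  (Y : I -> T -> R) : Prop :=
  forall (J : {set I}) (B : I -> set R), (forall j, measurable (B j)) ->
    P (\big[setI/setT]_(j in J) (Y j @^-1` B j)) =
    (\prod_(j in J) P (Y j @^-1` B j))%E.

Definition subPoisson (R : realType) (dm : measure_display)
  (T : measurableType dm) (P : probability T R) (X : T -> R) (rho : R) : Prop :=
  let m := fine 'E_P[X] in
  [/\ measurable_fun setT X,
      P.-integrable setT (EFin \o X),
      (forall lam : R,
         ('E_P[fun w => (expR (lam * (X w - m)))%R]
            <= (expR (rho * (expR `|lam| - 1 - `|lam|)))%:E)%E)
    & ('E_P[fun w => (`|X w - m|)%R] <= rho%:E)%E].

(* The core tensor is a function
   of label vectors ('I_d -> nat); only its values on valid labels
   (j k < r k for all k) matter and are constrained. *)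
Definition TBM (R : realType) (dm : measure_display) (T : measurableType dm)
  (P : probability T R) (d : nat) (n r : 'I_d -> nat) (rho : R)
  (S : ('I_d -> nat) -> R) (z : forall k : 'I_d, 'I_(n k) -> 'I_(r k))
  (Y : Idx n -> T -> R) : Prop :=
  [/\ 0 <= rho /\
        (forall j : 'I_d -> nat, (forall k, (j k < r k)%N) -> -1 <= S j <= 1),
      (forall i, measurable_fun setT (Y i)),
      (forall i w, Y i w \in Num.int),
      mutually_independent P Y
    & forall i, P.-integrable setT (EFin \o Y i) /\
                ('E_P[Y i] = (rho * S (labels z i))%:E)%E].

Definition nprefix (d' d : nat) (H : (d' <= d)%N) (n : 'I_d -> nat) :
  'I_d' -> nat := fun k => n (widen_ord H k).

Definition prefix (d' d : nat) (H : (d' <= d)%N) (n : 'I_d -> nat)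
  (i : Idx n) : Idx (nprefix H n) := finfun (fun k => i (widen_ord H k)).

Definition z_prefix (d' d : nat) (H : (d' <= d)%N) (n r : 'I_d -> nat)
  (z : forall k : 'I_d, 'I_(n k) -> 'I_(r k)) :
  forall k : 'I_d', 'I_(nprefix H n k) -> 'I_(nprefix H r k) :=
  fun k => z (widen_ord H k).

Definition aggregate (R : realType) (T : Type) (d' d : nat) (H : (d' <= d)%N)
  (n : 'I_d -> nat) (Y : Idx n -> T -> R) : Idx (nprefix H n) -> T -> R :=
  fun i' w => \sum_(i : Idx n | prefix H i == i') Y i w.

(* Indices of the last modes d'+1,...,d (0-based: k >= d'). *)
Definition TailIdx (d' d : nat) (n : 'I_d -> nat) :=
  {dffun forall k : {k : 'I_d | (d' <= k)%N}, 'I_(n (val k))}.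

Definition tail_size (d' d : nat) (n : 'I_d -> nat) : nat :=
  \prod_(k : 'I_d | (d' <= k)%N) n k.

(* Label vector (j_1,...,j_d', z_{d'+1}(i_{d'+1}),...,z_d(i_d)). *)
Definition comb_labels (d' d : nat) (n r : 'I_d -> nat)
  (z : forall k : 'I_d, 'I_(n k) -> 'I_(r k)) (j' : 'I_d' -> nat)
  (t : TailIdx d' n) : 'I_d -> nat :=
  fun k => match (insub (val k) : option 'I_d') with
           | Some kk => j' kk
           | None => match (insub k : option {k0 : 'I_d | (d' <= k0)%N}) with
                     | Some kk => val (z (val kk) (t kk))
                     | None => 0%N
                     end
           end.

Definition core_agg (R : realType) (d' d : nat) (n r : 'I_d -> nat)
  (z : forall k : 'I_d, 'I_(n k) -> 'I_(r k)) (S : ('I_d -> nat) -> R)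
  (j' : 'I_d' -> nat) : R :=
  (tail_size d' n)%:R^-1 * \sum_(t : TailIdx d' n) S (comb_labels z j' t).

From Pilot Require Import Defs.
From HB Require Import structures.
From mathcomp Require Import all_boot all_order all_algebra.
From mathcomp Require Import all_classical all_reals all_analysis.
Import Order.TTheory GRing.Theory Num.Theory.

(* Each entry of the aggregate tensor is the sum of [Y] over a block, the fibre
   of the prefix map, and these fibres are disjoint and in bijection with the
   trailing indices.  Summing the means over a fibre gives rho' S', and S' is
   an average of entries of S, hence in [-1, 1].  Sums over disjoint blocks of
   independent variables are independent, and the moment generating function of
   a block sum is the product of those of its summands; with the triangle
   inequality for the first absolute central moment this gives dispersion
   #block * rho.  Independence is only assumed for events, so the product formula
   for expectations is proved by conditioning on the values of one variable at a
   time, which is where integrality (a countable partition into atoms) is used. *)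

Set Implicit Arguments. Unset Strict Implicit. Unset Printing Implicit Defensive.
Local Open Scope ring_scope.

Section int_atoms.
Context (R : realType).
Local Open Scope classical_set_scope.

(* The singletons of the integers, enumerated through [pickle]; codes that
   decode to no integer give an empty atom (and value 0). *)
Definition int_atom (n : nat) : set R :=
  if @pickle_inv int n is Some z then [set z%:~R] else set0.

Definition int_atom_val (n : nat) : R :=
  if @pickle_inv int n is Some z then z%:~R else 0.

Lemma measurable_int_atom n : measurable (int_atom n).
Proof. by rewrite /int_atom; case: pickle_inv. Qed.

Lemma int_atomE n r : int_atom n r -> r = int_atom_val n.
Proof. by rewrite /int_atom /int_atom_val; case: pickle_inv => // z ->. Qed.

Lemma int_atom_cover r : r \in Num.int -> exists n, int_atom n r.
Proof. by case/intrP => z ->; exists (pickle z); rewrite /int_atom pickleK_inv. Qed.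

Lemma int_atom_inj n m r : int_atom n r -> int_atom m r -> n = m.
Proof.
rewrite /int_atom; have := @pickle_invK int n; have := @pickle_invK int m.
case: pickle_inv => [z|]//; case: pickle_inv => [z'|]//= <- <- -> /eqP.
by rewrite eqr_int => /eqP ->.
Qed.

End int_atoms.

Lemma ge0_nneseriesZl (R : realType) (c : \bar R) (f : nat -> \bar R) :
  (0 <= c)%E -> (forall n, 0 <= f n)%E ->
  (\sum_(n <oo) (c * f n) = c * \sum_(n <oo) f n)%E.
Proof.
case: c => [r| |] // c0 f0; first exact: nneseriesZl.
have [f_eq0|/existsNP[n0 fn0]] := pselect (forall n, f n = 0%E).
  by rewrite !eseries0 ?mule0 // => n _ _; rewrite f_eq0 ?mule0.
have fn0_gt0 : (0 < f n0)%E by rewrite lt0e f0 andbT; apply/eqP.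
have series_gt0 : (0 < \sum_(n <oo) f n)%E.
  apply: (lt_le_trans fn0_gt0); apply: le_trans (nneseries_lim_ge n0.+1 _) => [|n _ _ //].
  by rewrite big_nat_recr //= leeDr // sume_ge0.
rewrite gt0_mulye // (@eseries_pinfty _ _ _ n0) ?gt0_mulye // => n _.
by rewrite gt_eqF // (lt_le_trans ltNy0) // mule_ge0.
Qed.

Lemma disjointU1D1 (T : finType) (a : T) (J g : {set T}) :
  [disjoint J & g] -> [disjoint a |: J & g :\ a].
Proof.
move=> Jg; apply/pred0P => x /=; rewrite !inE.
have [//|_] /= := eqVneq x a.
by have [xJ|//] := boolP (x \in J); rewrite (disjointFr Jg xJ).
Qed.

Lemma lee_prod (R : realType) (I : Type) (r : seq I) (Q : pred I) (a b : I -> \bar R) :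
  (forall i, Q i -> (0 <= a i <= b i)%E) ->
  (\prod_(i <- r | Q i) a i <= \prod_(i <- r | Q i) b i)%E.
Proof.
move=> leab; elim/(big_load (fun x : \bar R => 0 <= x)%E): _.
elim/big_rec2: _ => // i y x /leab/andP[a0 ab] [y0 xy].
by rewrite mule_ge0 // lee_pmul.
Qed.

Section independent_integer_variables.
Context (R : realType) (dm : measure_display) (T : measurableType dm)
  (P : probability T R) (I : finType) (Y : I -> T -> R).
Hypotheses (mY : forall i, measurable_fun setT (Y i))
  (iY : forall i w, Y i w \in Num.int) (indY : mutually_independent P Y).

Definition event_on (J : {set I}) (B : I -> set R) : set T :=
  \big[setI/setT]_(j in J) (Y j @^-1` B j)%classic.

Definition block_sum (g : {set I}) (x : T) : R := \sum_(i in g) Y i x.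

Definition set_atom (B : I -> set R) (a : I) (n : nat) : I -> set R :=
  fun j => if j == a then int_atom n else B j.

Lemma measurable_set_atom B a n :
  (forall j, measurable (B j)) -> forall j, measurable (set_atom B a n j).
Proof.
by move=> mB j; rewrite /set_atom; case: ifP => _; [exact: measurable_int_atom | exact: mB].
Qed.

Lemma measurable_event_on J B :
  (forall j, measurable (B j)) -> measurable (event_on J B).
Proof.
move=> mB; apply: big_ind => //; first exact: measurableI.
by move=> j _; rewrite -[X in measurable X]setTI; exact: mY.
Qed.

Lemma event_on0 B : event_on finset.set0 B = setT.
Proof. by rewrite /event_on big_set0. Qed.

Lemma probability_event_on0 B : P (event_on finset.set0 B) = 1%E.
Proof. by rewrite event_on0; exact: probability_setT. Qed.

Lemma event_onU1 (J : {set I}) B a n : a \notin J ->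
  event_on (a |: J) (set_atom B a n) = (Y a @^-1` int_atom n `&` event_on J B)%classic.
Proof.
move=> aJ; rewrite /event_on big_setU1 //= /set_atom eqxx; congr (_ `&` _)%classic.
by apply: eq_bigr => j jJ; case: eqP => // ja; move: aJ; rewrite -ja jJ.
Qed.

Lemma probability_event_onU1 (J : {set I}) B a n :
  a \notin J -> (forall j, measurable (B j)) ->
  P (event_on (a |: J) (set_atom B a n)) =
  (P (Y a @^-1` int_atom n)%classic * P (event_on J B))%E.
Proof.
move=> aJ mB; rewrite [LHS]indY; last exact: measurable_set_atom.
rewrite big_setU1 //= indY // /set_atom eqxx; congr (_ * _)%E.
by apply: eq_bigr => j jJ; case: eqP => // ja; move: aJ; rewrite -ja jJ.
Qed.

Lemma measurable_block_sum g : measurable_fun setT (block_sum g).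
Proof.
rewrite /block_sum; under eq_fun do rewrite big_mkcond /=.
by apply: measurable_sum => i; case: (i \in g) => //; exact: measurable_cst.
Qed.

Lemma block_sumD1 (g : {set I}) a x :
  block_sum g x = (a \in g)%:R * Y a x + block_sum (g :\ a) x.
Proof.
have [ag|ag] := boolP (a \in g); first by rewrite mul1r /block_sum (big_setD1 a).
rewrite mul0r add0r; congr block_sum; apply/esym/finset.setDidPl.
by rewrite disjoint_sym disjoints1.
Qed.

Lemma integral_event_on_atoms (J : {set I}) B a (F : T -> R) : a \notin J ->
  (forall j, measurable (B j)) -> measurable_fun setT F -> (forall x, 0 <= F x) ->
  (\int[P]_(x in event_on J B) (F x)%:E =
   \sum_(n <oo) \int[P]_(x in event_on (a |: J) (set_atom B a n)) (F x)%:E)%E.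
Proof.
move=> aJ mB mF F0.
have -> : event_on J B = (\bigcup_n (Y a @^-1` int_atom n `&` event_on J B))%classic.
  apply/seteqP; split => [x Ex|x [n _ [_ //]]].
  by have [n hn] := int_atom_cover (iY a x); exists n.
rewrite ge0_integral_bigcup.
- by apply: eq_eseriesr => n _; rewrite event_onU1.
- move=> n; apply: measurableI; last exact: measurable_event_on.
  by rewrite -[X in measurable X]setTI; apply: mY => //; exact: measurable_int_atom.
- apply/measurable_realfun.measurable_EFinP.
  exact: (measurable_funS measurableT (subsetT _)).
- by move=> x _; rewrite lee_fin.
- by move=> n m _ _ [x [[/= xn _] [/= xm _]]]; exact: int_atom_inj xn xm.
Qed.

Lemma integral_event_on_peel (K : finType) (J' : {set K}) (g : K -> {set I})
    (h : K -> R -> R) (J : {set I}) (B : I -> set R) a : a \notin J ->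
  (forall j, measurable (B j)) ->
  (forall k, measurable_fun setT (h k)) -> (forall k t, 0 <= h k t) ->
  (\int[P]_(x in event_on J B) (\prod_(k in J') h k (block_sum (g k) x))%:E =
   \sum_(n <oo) \int[P]_(x in event_on (a |: J) (set_atom B a n))
     (\prod_(k in J') h k ((a \in g k)%:R * int_atom_val R n + block_sum (g k :\ a) x))%:E)%E.
Proof.
move=> aJ mB mh h0; rewrite (integral_event_on_atoms aJ) //; last first.
- by move=> x; apply: prodr_ge0 => k _.
- under eq_fun do rewrite big_mkcond /=.
  apply: measurable_prod => k _; case: (k \in J'); last exact: measurable_cst.
  exact: measurableT_comp (mh k) (measurable_block_sum _).
apply: eq_eseriesr => n _; apply: eq_integral => x.
rewrite event_onU1 // inE => -[/int_atomE ya _]; congr EFin.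
by apply: eq_bigr => k _; rewrite (block_sumD1 _ a) ya.
Qed.

(* Stated for an event on variables outside the blocks, so that conditioning on
   one variable stays within the statement; [m] bounds the total block size. *)
Definition block_factorization (m : nat) : Prop :=
  forall (K : finType) (J' : {set K}) (g : K -> {set I}) (h : K -> R -> R)
    (J : {set I}) (B : I -> set R),
  (\sum_(k in J') #|g k| <= m)%N ->
  {in J' &, forall k k', k != k' -> [disjoint g k & g k']} ->
  {in J', forall k, [disjoint J & g k]} ->
  (forall j, measurable (B j)) ->
  (forall k, measurable_fun setT (h k)) -> (forall k t, 0 <= h k t) ->
  (\int[P]_(x in event_on J B) (\prod_(k in J') h k (block_sum (g k) x))%:E =
   P (event_on J B) * \prod_(k in J') \int[P]_x (h k (block_sum (g k) x))%:E)%E.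

Lemma factorization_empty_blocks (K : finType) (J' : {set K}) (g : K -> {set I})
    (h : K -> R -> R) (J : {set I}) (B : I -> set R) :
  {in J', forall k, g k = finset.set0} -> (forall j, measurable (B j)) ->
  (\int[P]_(x in event_on J B) (\prod_(k in J') h k (block_sum (g k) x))%:E =
   P (event_on J B) * \prod_(k in J') \int[P]_x (h k (block_sum (g k) x))%:E)%E.
Proof.
move=> g0 mB.
have bs0 k x : k \in J' -> block_sum (g k) x = 0.
  by move=> kJ; rewrite /block_sum g0 // big_set0.
transitivity (\int[P]_(x in event_on J B) (cst (\prod_(k in J') h k 0)%:E) x)%E.
  by apply: eq_integral => x _; congr EFin; apply: eq_bigr => k kJ; rewrite bs0.
rewrite integral_cst; last exact: measurable_event_on.
rewrite muleC -prodEFin; congr (_ * _)%E; apply: eq_bigr => k kJ.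
transitivity (\int[P]_x (cst (h k 0)%:E) x)%E; last first.
  by apply: eq_integral => x _; rewrite bs0.
rewrite integral_cst // -[LHS]mule1; congr (_ * _)%E; exact/esym/probability_setT.
Qed.

Lemma block_factorization0 : block_factorization 0.
Proof.
move=> K J' g h J B size0 _ _ mB _ _; apply: factorization_empty_blocks => // k kJ.
apply/eqP; rewrite -cards_eq0 -leqn0; apply: leq_trans size0.
by rewrite (bigD1 k) //= leq_addr.
Qed.

Lemma block_factorization1 m : block_factorization m ->
  forall (g : {set I}) (h : R -> R) (J : {set I}) (B : I -> set R),
  (#|g| <= m)%N -> [disjoint J & g] -> (forall j, measurable (B j)) ->
  measurable_fun setT h -> (forall t, 0 <= h t) ->
  (\int[P]_(x in event_on J B) (h (block_sum g x))%:E =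
   P (event_on J B) * \int[P]_x (h (block_sum g x))%:E)%E.
Proof.
move=> fact g h J B gm Jg mB mh h0.
transitivity (\int[P]_(x in event_on J B) (\prod_(k in [set tt]) h (block_sum g x))%:E)%E.
  by apply: eq_integral => x _; rewrite big_set1.
by rewrite (fact unit [set tt] (fun=> g) (fun=> h)) ?big_set1.
Qed.

Lemma integral_block_sum_atoms m : block_factorization m ->
  forall (g : {set I}) (h : R -> R) a, a \in g -> (#|g| <= m.+1)%N ->
  measurable_fun setT h -> (forall t, 0 <= h t) ->
  (\int[P]_x (h (block_sum g x))%:E =
   \sum_(n <oo) (P (Y a @^-1` int_atom n)%classic *
     \int[P]_x (h (int_atom_val R n + block_sum (g :\ a) x))%:E))%E.
Proof.
move=> fact g h a ag gm mh h0.
pose B0 (j : I) := @setT R.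
have mB0 j : measurable (B0 j) := measurableT.
transitivity (\int[P]_(x in event_on finset.set0 B0) (h (block_sum g x))%:E)%E.
  by rewrite event_on0.
have a0 : a \notin finset.set0 by rewrite inE.
rewrite (integral_event_on_atoms a0) //; last first.
  exact: measurableT_comp mh (measurable_block_sum g).
apply: eq_eseriesr => n _.
transitivity (\int[P]_(x in event_on (a |: finset.set0) (set_atom B0 a n))
               (h (int_atom_val R n + block_sum (g :\ a) x))%:E)%E.
  apply: eq_integral => x; rewrite event_onU1 // inE => -[/int_atomE ya _].
  by rewrite (block_sumD1 _ a) ag mul1r ya.
rewrite (block_factorization1 fact (h := fun t => h (int_atom_val R n + t))) //.
- by rewrite probability_event_onU1 // probability_event_on0 mule1.
- by rewrite (cardsD1 a) ag add1n ltnS in gm.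
- by apply: disjointU1D1; rewrite -setI_eq0 finset.set0I.
- exact: measurable_set_atom.
- apply: measurableT_comp; first exact: mh.
  by apply: measurable_realfun.measurable_funD => //; exact: measurable_cst.
Qed.

(* Peeling off one variable [a] of a nonempty block [g k0]: conditionally on
   [Y a] the remaining blocks are again disjoint and smaller. *)
Lemma block_factorizationS m : block_factorization m -> block_factorization m.+1.
Proof.
move=> fact K J' g h J B gm gdis Jdis mB mh h0.
have [/forall_inP g0|/forall_inPn[k0 k0J /set0Pn[a ag]]] :=
  boolP [forall k in J', g k == finset.set0].
  by apply: factorization_empty_blocks => // k /g0/eqP.
have aJ : a \notin J by rewrite (disjointFl (Jdis k0 k0J) ag).
have agk k : k \in J' -> (a \in g k) = (k == k0).
  move=> kJ; have [->//|kk0] := eqVneq k k0.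
  by rewrite (disjointFr (gdis k0 k k0J kJ _) ag) // eq_sym.
have gk0m : (#|g k0| <= m.+1)%N by apply: leq_trans gm; rewrite (bigD1 k0) //= leq_addr.
have size_peel : (\sum_(k in J') #|g k :\ a| <= m)%N.
  rewrite -ltnS; apply: leq_trans gm.
  rewrite [ltnRHS](bigD1 k0) // [ltnLHS](bigD1 k0) //= (cardsD1 a (g k0)) ag.
  rewrite add1n addSn ltnS leq_add2l; apply: leq_sum => k _; exact/subset_leq_card/subsetDl.
have Ek0 := integral_block_sum_atoms fact ag gk0m (mh k0) (h0 k0).
set C := (P (event_on J B) *
  \prod_(k in J' | k != k0) \int[P]_x (h k (block_sum (g k) x))%:E)%E.
rewrite (integral_event_on_peel _ _ aJ) //.
transitivity (\sum_(n <oo) (C * (P (Y a @^-1` int_atom n)%classic *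
  \int[P]_x (h k0 (int_atom_val R n + block_sum (g k0 :\ a) x))%:E)))%E.
  apply: eq_eseriesr => n _.
  pose h' k t := h k ((a \in g k)%:R * int_atom_val R n + t).
  rewrite (fact K J' (fun k => g k :\ a) h') //.
  - rewrite probability_event_onU1 // (bigD1 k0) //= /h' agk // eqxx mul1r.
    rewrite (eq_bigr (fun k => \int[P]_x (h k (block_sum (g k) x))%:E)%E); last first.
      move=> k /andP[kJ kk0]; apply: eq_integral => x _.
      by rewrite [in RHS](block_sumD1 _ a) agk // (negbTE kk0) !mul0r.
    by rewrite muleACA muleC.
  - move=> k k' kJ k'J kk'; apply: disjointWl (subsetDl _ _) _.
    exact: disjointWr (subsetDl _ _) (gdis k k' kJ k'J kk').
  - by move=> k kJ; apply: disjointU1D1; exact: Jdis.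
  - exact: measurable_set_atom.
  - move=> k; apply: measurableT_comp; first exact: mh.
    by apply: measurable_realfun.measurable_funD => //; exact: measurable_cst.
  - by move=> k t; exact: h0.
rewrite ge0_nneseriesZl; last 2 first.
- apply: mule_ge0 => //; apply: prode_ge0 => k _.
  by apply: integral_ge0 => x _; rewrite lee_fin.
- by move=> n; apply: mule_ge0 => //; apply: integral_ge0 => x _; rewrite lee_fin.
by rewrite -Ek0 [in RHS](bigD1 k0) //= [X in _ = (_ * X)%E]muleC muleA.
Qed.

Lemma block_factorization_all m : block_factorization m.
Proof. by elim: m => [|m]; [exact: block_factorization0 | exact: block_factorizationS]. Qed.

Lemma integral_prod_block_sums (K : finType) (J' : {set K}) (g : K -> {set I})
    (h : K -> R -> R) :
  {in J' &, forall k k', k != k' -> [disjoint g k & g k']} ->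
  (forall k, measurable_fun setT (h k)) -> (forall k t, 0 <= h k t) ->
  (\int[P]_x (\prod_(k in J') h k (block_sum (g k) x))%:E =
   \prod_(k in J') \int[P]_x (h k (block_sum (g k) x))%:E)%E.
Proof.
move=> gdis mh h0.
have := @block_factorization_all _ K J' g h finset.set0 (fun=> setT) (leqnn _) gdis.
rewrite probability_event_on0 mul1e event_on0; apply=> // k _.
by rewrite -setI_eq0 finset.set0I.
Qed.

Lemma block_sums_independent (K : finType) (g : K -> {set I}) :
  (forall k k', k != k' -> [disjoint g k & g k']) ->
  mutually_independent P (fun k => block_sum (g k)).
Proof.
move=> gdis J' B' mB'.
have mpre k : measurable (block_sum (g k) @^-1` B' k)%classic.
  by rewrite -[X in measurable X]setTI; exact: measurable_block_sum.
have indic_preimage k x :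
    \1_(B' k) (block_sum (g k) x) = \1_(block_sum (g k) @^-1` B' k)%classic x :> R.
  by rewrite !indicE.
set A := \big[setI/setT]_(j in J') _.
rewrite -(setIT A) -integral_indic //; last by apply: big_ind => //; exact: measurableI.
transitivity (\int[P]_x (\prod_(k in J') \1_(B' k) (block_sum (g k) x))%:E)%E.
  apply: eq_integral => x _; rewrite /A; congr EFin; apply/esym.
  elim/big_rec2: _ => [|k y A' _ ->]; first by rewrite indicT.
  by rewrite indicI indic_preimage.
rewrite (integral_prod_block_sums (h := fun k => \1_(B' k)) (fun k k' _ _ => gdis k k'));
  last 2 first.
- by move=> k; exact: measurable_realfun.measurable_indic.
- by move=> k t; rewrite indicE.
apply: eq_bigr => k _ /=.
by rewrite -(setIT (block_sum (g k) @^-1` B' k)%classic) -integral_indic.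
Qed.

Lemma integral_prod_indep (G : {set I}) (f : I -> R -> R) :
  (forall i, measurable_fun setT (f i)) -> (forall i t, 0 <= f i t) ->
  (\int[P]_x (\prod_(i in G) f i (Y i x))%:E =
   \prod_(i in G) \int[P]_x (f i (Y i x))%:E)%E.
Proof.
move=> mf f0.
have block1 i x : block_sum [set i] x = Y i x by rewrite /block_sum big_set1.
have gdis : {in G &, forall i j, i != j -> [disjoint [set i] & [set j]]}.
  by move=> i j _ _ ij; rewrite disjoints1 inE.
have := integral_prod_block_sums gdis mf f0.
under eq_integral do under eq_bigr do rewrite block1.
by under eq_bigr do under eq_integral do rewrite block1.
Qed.

Lemma integrable_block_sum (G : {set I}) :
  (forall i, P.-integrable setT (EFin \o Y i)) -> P.-integrable setT (EFin \o block_sum G).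
Proof.
move=> intY; apply: (eq_integrable measurableT (fun x => \sum_(i in G) (Y i x)%:E)%E).
  by move=> x _ /=; rewrite sumEFin.
by apply: (integrable_sum measurableT) => i _; exact: intY.
Qed.

Lemma expectation_block_sum (G : {set I}) :
  (forall i, P.-integrable setT (EFin \o Y i)) ->
  ('E_P[block_sum G] = \sum_(i in G) 'E_P[Y i])%E.
Proof.
move=> intY; rewrite unlock /block_sum.
under eq_integral do rewrite -sumEFin.
exact: (integral_sum measurableT).
Qed.

Lemma subPoisson_block_sum (G : {set I}) (rho : R) :
  (forall i, subPoisson P (Y i) rho) -> subPoisson P (block_sum G) (#|G|%:R * rho).
Proof.
move=> subY.
have intY i : P.-integrable setT (EFin \o Y i) by case: (subY i).
pose m i := fine ('E_P[Y i])%E.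
have EYm i : ('E_P[Y i] = (m i)%:E)%E.
  by rewrite fineK // unlock; exact: integrable_fin_num (intY i).
have mE : fine ('E_P[block_sum G])%E = \sum_(i in G) m i.
  by rewrite expectation_block_sum // (eq_bigr _ (fun i _ => EYm i)) sumEFin.
rewrite /subPoisson mE; split.
- exact: measurable_block_sum.
- exact: integrable_block_sum.
- move=> lam.
  pose f i t := expR (lam * (t - m i)).
  have mf i : measurable_fun setT (f i).
    apply: measurableT_comp; first exact: measurable_realfun.measurable_expR.
    apply: measurable_realfun.measurable_funM; first exact: measurable_cst.
    by apply: measurable_realfun.measurable_funD; [exact: measurable_id | exact: measurable_cst].
  have -> : (fun w => expR (lam * (block_sum G w - \sum_(i in G) m i))) =
            (fun w => \prod_(i in G) f i (Y i w)).
    by apply/funext => w; rewrite /block_sum -sumrB mulr_sumr expR_sum.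
  rewrite unlock integral_prod_indep //; last by move=> i t; exact: expR_ge0.
  apply: (@le_trans _ _ (\prod_(i in G) (expR (rho * (expR `|lam| - 1 - `|lam|)))%:E)%E).
    apply: lee_prod => i _; apply/andP; split.
      by apply: integral_ge0 => x _; rewrite lee_fin expR_ge0.
    by case: (subY i) => _ _ /(_ lam) + _; rewrite /f /m unlock.
  by rewrite prodEFin prodr_const -expRM_natl mulrA.
- pose g i w := `|Y i w - m i|.
  have mg i : measurable_fun setT (g i).
    apply: measurableT_comp => //.
    by apply: measurable_realfun.measurable_funD; [exact: mY | exact: measurable_cst].
  have intg i : P.-integrable setT (fun x => (g i x)%:E).
    apply: (eq_integrable measurableT (abse \o ((EFin \o Y i) \- (EFin \o cst (m i))))%E) => //.
    apply/integrable_abse/(integrableB measurableT (intY i)).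
    exact: finite_measure_integrable_cst.
  apply: (@le_trans _ _ (\int[P]_x (\sum_(i in G) g i x)%:E)%E).
    rewrite unlock; apply: ge0_le_integral => //.
    - apply/measurable_realfun.measurable_EFinP; apply: measurableT_comp => //.
      apply: measurable_realfun.measurable_funD;
        [exact: measurable_block_sum | exact: measurable_cst].
    - apply/measurable_realfun.measurable_EFinP.
      under eq_fun do rewrite big_mkcond /=.
      by apply: measurable_sum => i; case: (i \in G); [exact: mg | exact: measurable_cst].
    - by move=> x _; rewrite lee_fin /block_sum -sumrB ler_norm_sum.
  under eq_integral do rewrite -sumEFin.
  rewrite (integral_sum measurableT intg).
  apply: (@le_trans _ _ (\sum_(i in G) rho%:E)%E).
    by apply: lee_sum => i _; case: (subY i) => _ _ _; rewrite /g /m unlock.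
  by rewrite sumEFin sumr_const mulr_natl.
Qed.

End independent_integer_variables.

Section tail_indices.
Context (d' d : nat) (H : (d' <= d)%N) (n : 'I_d -> nat).

Definition tail_of (i : Idx n) : TailIdx d' n :=
  [ffun k : {k : 'I_d | (d' <= k)%N} => i (val k)].

Definition join_at (i' : Idx (nprefix H n)) (t : TailIdx d' n) (k : 'I_d) : 'I_(n k) :=
  match ltnP k d' with
  | LtnNotGeq hk =>
      cast_ord (congr1 n (@val_inj _ _ _ (widen_ord H (Ordinal hk)) k erefl)) (i' (Ordinal hk))
  | GeqNotLtn hk => t (exist _ k hk)
  end.

Definition join (i' : Idx (nprefix H n)) (t : TailIdx d' n) : Idx n := [ffun k => join_at i' t k].

Lemma join_at_lt i' t (k : 'I_d) (hk : (k < d')%N) :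
  val (join_at i' t k) = val (i' (Ordinal hk)).
Proof.
rewrite /join_at; case: (ltnP k d') => [hk'|hk']; last by have := leq_trans hk hk'; rewrite ltnn.
by rewrite (bool_irrelevance hk' hk).
Qed.

Lemma join_at_ge i' t (k : 'I_d) (hk : (d' <= k)%N) :
  val (join_at i' t k) = val (t (exist _ k hk)).
Proof.
rewrite /join_at; case: (ltnP k d') => [hk'|hk']; first by have := leq_trans hk' hk; rewrite ltnn.
by rewrite (bool_irrelevance hk' hk).
Qed.

Lemma prefix_join i' t : Defs.prefix H (join i' t) = i'.
Proof.
apply/ffunP => k; apply: val_inj.
rewrite /Defs.prefix (@ffunE _ (fun k => 'I_(nprefix H n k))).
rewrite /join (@ffunE _ (fun k => 'I_(n k))) (@join_at_lt i' t (widen_ord H k) (ltn_ord k)).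
by congr (val (i' _)); apply: val_inj.
Qed.

Lemma tail_of_join i' t : tail_of (join i' t) = t.
Proof.
apply/ffunP => -[k hk]; apply: val_inj.
rewrite /tail_of (@ffunE _ (fun k => 'I_(n (val k)))) /=.
by rewrite /join (@ffunE _ (fun k => 'I_(n k))) (join_at_ge _ _ hk).
Qed.

Lemma join_tail_of i : join (Defs.prefix H i) (tail_of i) = i.
Proof.
apply/ffunP => k; apply: val_inj; rewrite /join (@ffunE _ (fun k => 'I_(n k))).
have [hk|hk] := ltnP k d'.
  rewrite (join_at_lt _ _ hk) /Defs.prefix (@ffunE _ (fun k => 'I_(nprefix H n k))).
  have val_i (w : 'I_d) : w = k -> val (i w) = val (i k) by move->.
  by apply: val_i; apply: val_inj.
by rewrite (join_at_ge _ _ hk) /tail_of (@ffunE _ (fun k => 'I_(n (val k)))).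
Qed.

Lemma card_TailIdx : #|{: TailIdx d' n}| = tail_size d' n.
Proof.
rewrite card_dep_ffun /tail_size foldrE big_map big_enum /=.
rewrite (reindex_omap (val : {k : 'I_d | (d' <= k)%N} -> 'I_d) insub); last first.
  by move=> k hk; rewrite insubT.
apply: eq_big => [[k hk]|[k hk] _] /=; last by rewrite card_ord.
by rewrite hk insubT /=; apply/esym/eqP; congr Some; apply: val_inj.
Qed.

Lemma big_prefix (R : Type) (idx : R) (op : Monoid.com_law idx) (i' : Idx (nprefix H n))
  (F : Idx n -> R) :
  \big[op/idx]_(i | Defs.prefix H i == i') F i = \big[op/idx]_(t : TailIdx d' n) F (join i' t).
Proof.
rewrite (reindex_onto (join i') tail_of) => [|i /eqP <-]; last exact: join_tail_of.
by apply: eq_bigl => t; rewrite prefix_join tail_of_join !eqxx.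
Qed.

Lemma labels_join (r : 'I_d -> nat) (z : forall k, 'I_(n k) -> 'I_(r k)) i' t :
  labels z (join i' t) = comb_labels z (labels (z_prefix z) i') t.
Proof.
have zval (k w : 'I_d) (x : 'I_(n k)) (y : 'I_(n w)) :
    w = k -> val x = val y -> val (z k x) = val (z w y).
  by move=> e; subst w => /val_inj ->.
apply/funext => k; rewrite /labels /comb_labels /join (@ffunE _ (fun k => 'I_(n k))).
have [hk|hk] := ltnP k d'.
  by rewrite insubT /z_prefix; apply: zval; [exact: val_inj | exact: join_at_lt].
rewrite insubF ?ltnNge ?hk // insubT /=.
by apply: zval => //; exact: join_at_ge.
Qed.

Lemma comb_labels_lt (r : 'I_d -> nat) (z : forall k, 'I_(n k) -> 'I_(r k))
    (j' : 'I_d' -> nat) (t : TailIdx d' n) :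
  (forall k, j' k < nprefix H r k)%N -> forall k, (comb_labels z j' t k < r k)%N.
Proof.
move=> j'r k; rewrite /comb_labels; have [hk|hk] := ltnP k d'.
  rewrite insubT; have := j'r (Ordinal hk); rewrite /nprefix.
  by have -> : widen_ord H (Ordinal hk) = k by apply: val_inj.
rewrite insubF; last by rewrite ltnNge hk.
by rewrite insubT /=.
Qed.

End tail_indices.

Lemma norm_mean_le1 (R : realFieldType) (X : finType) (f : X -> R) :
  (forall x, `|f x| <= 1) -> `|#|X|%:R^-1 * \sum_x f x| <= 1.
Proof.
move=> f1; have [X0|X_gt0] := posnP #|X|; first by rewrite X0 invr0 mul0r normr0 ler01.
rewrite normrM normfV normr_nat ler_pdivrMl ?ltr0n // mulr1.
apply: le_trans (ler_norm_sum _ _ _) _.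
by rewrite -[#|X|]sum1_card natr_sum; apply: ler_sum.
Qed.

Lemma sum_labels_prefix (R : realType) (d' d : nat) (H : (d' <= d)%N) (n r : 'I_d -> nat)
    (z : forall k, 'I_(n k) -> 'I_(r k)) (S : ('I_d -> nat) -> R) (i' : Idx (nprefix H n)) :
  \sum_(i | Defs.prefix H i == i') S (labels z i) =
  (tail_size d' n)%:R * core_agg z S (labels (z_prefix z) i').
Proof.
rewrite big_prefix; under eq_bigr do rewrite labels_join.
rewrite /core_agg mulrA; have [N0|N0] := eqVneq (tail_size d' n) 0%N.
  rewrite N0 !mul0r big_pred0 // => t.
  by move: (card0_eq (etrans (card_TailIdx d' n) N0) t); rewrite inE.
by rewrite mulfV ?pnatr_eq0 // mul1r.
Qed.

Unset Implicit Arguments.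

Theorem theorem3p2 (R : realType) (dm : measure_display) (T : measurableType dm)
  (P : probability T R) (d : nat) (n r : 'I_d -> nat) (rho : R)
  (S : ('I_d -> nat) -> R) (z : forall k : 'I_d, 'I_(n k) -> 'I_(r k))
  (Y : Idx n -> T -> R) (d' : nat) (hd1 : (1 <= d')%N) (hd : (d' < d)%N) :
  TBM P rho S z Y ->
  (forall i, subPoisson P (Y i) rho) ->
  let H := ltnW hd in
  let rho' := (tail_size d' n)%:R * rho in
  TBM P rho' (@core_agg R d' d n r z S) (@z_prefix d' d H n r z) (@aggregate R T d' d H n Y) /\
  (forall i', subPoisson P (@aggregate R T d' d H n Y i') rho').
Proof.
move=> [[rho0 Sb] mY iY indY EY] subY H rho'.
pose G (i' : Idx (nprefix H n)) := [set i : Idx n | Defs.prefix H i == i'].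
have aggE : @aggregate R T d' d H n Y = fun i' => block_sum Y (G i').
  by apply/funext => i'; apply/funext => w; apply: eq_bigl => i; rewrite inE.
have inG i' i : (i \in G i') = (Defs.prefix H i == i') by rewrite inE.
have cardG i' : #|G i'| = tail_size d' n.
  by rewrite -sum1_card (eq_bigl _ _ (inG i')) big_prefix sum1_card card_TailIdx.
split; last by move=> i'; rewrite aggE /rho' -(cardG i'); exact: subPoisson_block_sum.
rewrite aggE; split.
- split; first by rewrite mulr_ge0 ?ler0n.
  move=> j' j'r; rewrite -ler_norml /core_agg -card_TailIdx.
  by apply: norm_mean_le1 => t; rewrite ler_norml Sb //; exact: comb_labels_lt.
- by move=> i'; exact: measurable_block_sum.
- by move=> i' w; apply: rpred_sum => i _; exact: iY.
- apply: block_sums_independent => // i' j' i'j'.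
  rewrite -setI_eq0; apply/eqP/setP => i; rewrite !inE.
  by apply/negbTE; apply: contra i'j' => /andP[/eqP <- /eqP <-].
- move=> i'; split; first by apply: integrable_block_sum => i; case: (EY i).
  rewrite expectation_block_sum => [|i]; last by case: (EY i).
  rewrite (eq_bigr _ (fun i _ => proj2 (EY i))) sumEFin -mulr_sumr.
  by rewrite (eq_bigl _ _ (inG i')) sum_labels_prefix mulrA (mulrC rho).
Qed.
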